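(* Fix any $\lambda\in[0,\infty)$ and $i\in[n]$. If $\ell(z_i,\cdot)$ is differentiable and $m(P_{-i},\cdot,\lambda)$ has $\nu(r)=c_mr^q$ gradient growth for some $c_m>0$ and $q>0$, then $$\|\hat\beta(\lambda)-\hat\beta_{-i}(\lambda)\|_2^{q-1}\le\frac1n\frac1{c_m}\|\nabla_\beta\ell(z_i,\hat\beta(\lambda))\|_2.$$
   Context: Data $z_1,\dots,z_n\in\mathcal Z$; loss $\ell:\mathcal Z\times\mathbb{R}^d\to\mathbb{R}$, regularizer $\pi:\mathbb{R}^d\to\mathbb{R}$. $\ell(\mu,\beta):=\int\ell(z,\beta)d\mu(z)$, $m(\mu,\beta,\lambda):=\ell(\mu,\beta)+\lambda\pi(\beta)$; $P_n:=\frac1n\sum_i\delta_{z_i}$, $P_{-i}:=\frac1n\sum_{j\ne i}\delta_{z_j}$. $\hat\beta(\lambda):=\arg\min_\beta m(P_n,\beta,\lambda)$, $\hat\beta_{-i}(\lambda):=\arg\min_\beta m(P_{-i},\beta,\lambda)$. A function $\varphi$ has $\nu$ gradient growth if it is subdifferentiable and $\nu(\|x-y\|_2)\le\langle y-x,u-v\rangle$ for all $x,y\in\mathbb{R}^d$ and all $u\in\partial\varphi(y)$, $v\in\partial\varphi(x)$. *)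

From HB Require Import structures.
From mathcomp Require Import all_boot all_order all_algebra.
From mathcomp Require Import all_classical all_reals all_analysis.
Set Implicit Arguments. Unset Strict Implicit. Unset Printing Implicit Defensive.
Import Order.TTheory GRing.Theory Num.Theory.
Import numFieldNormedType.Exports.
Local Open Scope ring_scope.

Section Defs.
Variable R : realType.
Variable d : nat.

Definition dotv (x y : 'rV[R]_d) : R := \sum_(j < d) x ord0 j * y ord0 j.
Definition norm2 (x : 'rV[R]_d) : R := Num.sqrt (dotv x x).

Definition grad (f : 'rV[R]_d -> R) (x : 'rV[R]_d) : 'rV[R]_d :=
  \row_(j < d) ('d f x) (delta_mx ord0 j).

Definition subgrad (phi : 'rV[R]_d -> R) (x u : 'rV[R]_d) : Prop :=
  forall y, phi x + dotv u (y - x) <= phi y.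

Definition gradient_growth (phi : 'rV[R]_d -> R) (nu : R -> R) : Prop :=
  (forall x, exists u, subgrad phi x u) /\
  (forall x y u v, subgrad phi y u -> subgrad phi x v ->
     nu (norm2 (x - y)) <= dotv (y - x) (u - v)).

Variables (Z : Type) (n : nat).

(* m(P_n, beta, lambda) with P_n = (1/n) sum_i delta_{z_i} *)
Definition m_full (z : 'I_n -> Z) (loss : Z -> 'rV[R]_d -> R)
  (pen : 'rV[R]_d -> R) (lam : R) (b : 'rV[R]_d) : R :=
  n%:R^-1 * (\sum_(j < n) loss (z j) b) + lam * pen b.

(* m(P_{-i}, beta, lambda) with P_{-i} = (1/n) sum_{j <> i} delta_{z_j} *)
Definition m_loo (z : 'I_n -> Z) (loss : Z -> 'rV[R]_d -> R)
  (pen : 'rV[R]_d -> R) (lam : R) (i : 'I_n) (b : 'rV[R]_d) : R :=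
  n%:R^-1 * (\sum_(j < n | j != i) loss (z j) b) + lam * pen b.

Definition is_minimizer (f : 'rV[R]_d -> R) (b : 'rV[R]_d) : Prop :=
  forall b', f b <= f b'.
End Defs.

From HB Require Import structures.
From mathcomp Require Import all_boot all_order all_algebra.
From mathcomp Require Import all_classical all_reals all_analysis.
From mathcomp Require Import ring lra.
Set Implicit Arguments.
Unset Strict Implicit.
Unset Printing Implicit Defensive.

Import Order.TTheory GRing.Theory Num.Theory.
Import numFieldNormedType.Exports.
Local Open Scope classical_set_scope.
Local Open Scope ring_scope.

(* Write [m(P_n) = m(P_{-i}) + l_i / n].  Since [bhat] minimizes this sum and
   [m(P_{-i})] is convex, [-(1/n) grad l_i(bhat)] is a subgradient of [m(P_{-i})]
   at [bhat], while [0] is one at its minimizer [bhat_i].  Gradient growth and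
   Cauchy-Schwarz give [c r^q <= r |grad l_i(bhat)| / n] for
   [r = |bhat - bhat_i|], and dividing by [r] gives the bound.  When [r = 0]
   the left-hand side [0 ^ (q - 1)] vanishes unless [q = 1]; that case cannot
   occur, since no function on a nontrivial space has gradient growth [c r]
   with [c > 0]. *)

Lemma le_diff_of_quotient (R : realType) (V : normedModType R) (f : V -> R)
    (a v : V) (K : R) :
  differentiable f a ->
  (forall t : R, 0 < t -> t <= 1 -> K <= (f (a + t *: v) - f a) / t) ->
  K <= 'd f a v.
Proof.
move=> df lbK; rewrite -deriveE //.
have quot_cvg : (fun h : R => h^-1 *: ((f \o shift a) (h *: v) - f a))
    @ (0 : R)^'+ --> 'D_v f a.
  apply: cvg_trans (diff_derivable df) => A /=.
  rewrite !near_simpl /= !near_withinE; apply: filter_app.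
  by near=> t => At t0; apply: At; rewrite gt_eqF.
apply: (cvgr_to_ge quot_cvg); near=> t.
have t0 : 0 < t by near: t; exact: nbhs_right_gt.
have t1 : t <= 1 by near: t; exact: nbhs_right_le.
by rewrite /= [X in f X]addrC -[_ *: _]/(_ * _) mulrC; exact: lbK.
Unshelve. all: by end_near. Qed.

Lemma powR_subr1_le (R : realType) (c q r K : R) :
  0 < c -> q != 1 -> 0 <= r -> 0 <= K ->
  c * r `^ q <= r * K -> r `^ (q - 1) <= c^-1 * K.
Proof.
move=> c0 q1 r0 K0 growth.
have [->|rpos] := eqVneq r 0.
  by rewrite powR0 ?subr_eq0 // mulr_ge0 // invr_ge0 ltW.
have rgt0 : 0 < r by rewrite lt_def rpos.
have powR_q : r `^ q = r `^ (q - 1) * r.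
  by rewrite -{3}(powRr1 r0) -powRD ?subrK // rpos implybT.
by rewrite ler_pdivlMl // -(ler_pM2r rgt0) -mulrA -powR_q (mulrC K).
Qed.

Section Euclidean.
Variables (R : realType) (d : nat).
Implicit Types (x y u v w : 'rV[R]_d) (phi : 'rV[R]_d -> R).

Lemma dotvC x y : dotv x y = dotv y x.
Proof. by apply: eq_bigr => j _; rewrite mulrC. Qed.

Lemma dotvDl x y u : dotv (x + y) u = dotv x u + dotv y u.
Proof. by rewrite /dotv -big_split; apply: eq_bigr => j _; rewrite !mxE mulrDl. Qed.

Lemma dotvZl (s : R) x u : dotv (s *: x) u = s * dotv x u.
Proof. by rewrite /dotv mulr_sumr; apply: eq_bigr => j _; rewrite !mxE mulrA. Qed.

Lemma dotvNl x u : dotv (- x) u = - dotv x u.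
Proof. by rewrite -scaleN1r dotvZl mulN1r. Qed.

Lemma dotvBl x y u : dotv (x - y) u = dotv x u - dotv y u.
Proof. by rewrite dotvDl dotvNl. Qed.

Lemma dotvZr (s : R) x u : dotv u (s *: x) = s * dotv u x.
Proof. by rewrite dotvC dotvZl dotvC. Qed.

Lemma dotvBr x y u : dotv u (x - y) = dotv u x - dotv u y.
Proof. by rewrite dotvC dotvBl !(dotvC u). Qed.

Lemma dotv0l u : dotv 0 u = 0.
Proof. by rewrite -(scale0r 0) dotvZl mul0r. Qed.

Lemma dotv0r u : dotv u 0 = 0.
Proof. by rewrite dotvC dotv0l. Qed.

Lemma dotvv_ge0 x : 0 <= dotv x x.
Proof. by apply: sumr_ge0 => j _; rewrite -expr2 sqr_ge0. Qed.

Lemma dotvv_eq0 x : (dotv x x == 0) = (x == 0).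
Proof.
apply/idP/eqP => [xx0|->]; last by rewrite dotv0l.
have sq_ge0 k : predT k -> 0 <= x ord0 k * x ord0 k.
  by move=> _; rewrite -expr2 sqr_ge0.
apply/rowP => j; rewrite !mxE; apply/eqP.
by have /eqP := psumr_eq0P sq_ge0 (eqP xx0) (i := j) isT; rewrite mulf_eq0 orbb.
Qed.

Lemma norm2_ge0 x : 0 <= norm2 x.
Proof. exact: sqrtr_ge0. Qed.

Lemma norm2_gt0 x : x != 0 -> 0 < norm2 x.
Proof. by rewrite sqrtr_gt0 lt_def dotvv_ge0 dotvv_eq0 andbT. Qed.

Lemma norm2_sqr x : norm2 x ^+ 2 = dotv x x.
Proof. by rewrite sqr_sqrtr // dotvv_ge0. Qed.

Lemma norm2Z (s : R) x : norm2 (s *: x) = `|s| * norm2 x.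
Proof.
by rewrite /norm2 dotvZl dotvZr mulrA -expr2 sqrtrM ?sqr_ge0 // sqrtr_sqr.
Qed.

Lemma norm2N x : norm2 (- x) = norm2 x.
Proof. by rewrite -scaleN1r norm2Z normrN normr1 mul1r. Qed.

Lemma norm2_eq0 x : norm2 x = 0 -> x = 0.
Proof.
by move=> /eqP; rewrite sqrtr_eq0 le_eqVlt ltNge dotvv_ge0 orbF dotvv_eq0 => /eqP.
Qed.

(* Cauchy-Schwarz, from [0 <= |B x - A y|^2] with [A = |x|], [B = |y|]. *)
Lemma dotv_le_norm2 x y : dotv x y <= norm2 x * norm2 y.
Proof.
set A := norm2 x; set B := norm2 y.
have A0 : 0 <= A := norm2_ge0 x; have B0 : 0 <= B := norm2_ge0 y.
have [AB0|] := ltP 0 (A * B).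
  have := dotvv_ge0 (B *: x - A *: y).
  rewrite !(dotvBl, dotvBr, dotvZl, dotvZr) -!norm2_sqr -/A -/B (dotvC y x).
  have -> : B * (B * A ^+ 2 - A * dotv x y) - A * (B * dotv x y - A * B ^+ 2)
      = (A * B) * (A * B - dotv x y) *+ 2 by ring.
  by rewrite pmulrn_lge0 // pmulr_rge0 // subr_ge0.
move=> AB_le0; have AB0 : A * B = 0 by apply/le_anti; rewrite AB_le0 mulr_ge0.
move/eqP: (AB0); rewrite mulf_eq0 => /orP[|] /eqP/norm2_eq0 ->.
  by rewrite dotv0l AB0.
by rewrite dotv0r AB0.
Qed.

Lemma diff_dotv_grad (f : 'rV[R]_d -> R) x h : 'd f x h = dotv (grad f x) h.
Proof.
rewrite {1}(row_sum_delta h) linear_sum; apply: eq_bigr => j _.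
by rewrite linearZ /= mxE mulrC.
Qed.

Lemma subgrad_convex phi a b (t : R) :
  (forall x, exists u, subgrad phi x u) -> 0 <= t <= 1 ->
  phi (a + t *: (b - a)) <= (1 - t) * phi a + t * phi b.
Proof.
move=> has_subgrad /andP[t0 t1]; set p := a + t *: (b - a).
have [w w_sub] := has_subgrad p.
have := w_sub a; have := w_sub b.
have -> : a - p = (- t) *: (b - a) by rewrite opprD addrA subrr add0r scaleNr.
have -> : b - p = (1 - t) *: (b - a) by rewrite scalerBl scale1r opprD addrA.
rewrite !dotvZr; nra.
Qed.

Lemma subgrad_minimizer phi x : is_minimizer phi x -> subgrad phi x 0.
Proof. by move=> xmin y; rewrite dotv0l addr0. Qed.

(* By convexity of [phi], the difference quotients of [l] at [x] along [y - x]
   dominate [(phi x - phi y) / c]. *)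
Lemma subgrad_minimizer_addr phi (l : 'rV[R]_d -> R) (c : R) x :
  (forall y, exists u, subgrad phi y u) -> differentiable l x -> 0 < c ->
  is_minimizer (fun y => phi y + c * l y) x ->
  subgrad phi x (- (c *: grad l x)).
Proof.
move=> has_subgrad dl c0 xmin y.
suff : (phi x - phi y) / c <= 'd l x (y - x).
  by rewrite diff_dotv_grad dotvNl dotvZl ler_pdivrMr // mulrC; lra.
apply: le_diff_of_quotient dl _ => t t0 t1.
set p := x + t *: (y - x).
have conv : phi p <= (1 - t) * phi x + t * phi y.
  by apply: subgrad_convex => //; rewrite ltW.
have := xmin p; rewrite ler_pdivlMr // mulrAC ler_pdivrMr //; nra.
Qed.

Lemma gradient_growth_gap phi nu x y u v :
  gradient_growth phi nu -> subgrad phi y u -> subgrad phi x v ->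
  nu (norm2 (y - x)) <= norm2 (y - x) * norm2 (u - v).
Proof.
move=> [_ growth] yu xv.
have := growth _ _ _ _ yu xv; rewrite -[x - y]opprB norm2N => /le_trans; apply.
exact: dotv_le_norm2.
Qed.

Section LinearGrowth.
Variables (phi : 'rV[R]_d -> R) (c : R).
Hypothesis growth : gradient_growth phi (fun r => c * r `^ 1).

Lemma linear_growth_step x v (s : R) u w : 0 < s ->
  subgrad phi (x + s *: v) w -> subgrad phi x u ->
  c * norm2 v <= dotv v (w - u).
Proof.
move=> s0 w_sub u_sub.
have := growth.2 _ _ _ _ w_sub u_sub.
rewrite opprD addrA subrr add0r norm2N norm2Z gtr0_norm // powRr1; last first.
  by rewrite mulr_ge0 ?norm2_ge0 ?ltW.
by rewrite addrAC subrr add0r dotvZl mulrCA ler_pM2l.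
Qed.

Lemma linear_growth_iter x v (s : R) u w k : 0 < s ->
  subgrad phi (x + (k.+1%:R * s) *: v) w -> subgrad phi x u ->
  k.+1%:R * (c * norm2 v) <= dotv v (w - u).
Proof.
move=> s0; elim: k w => [|k IHk] w w_sub u_sub.
  by rewrite mul1r; apply: linear_growth_step s0 _ u_sub; rewrite mul1r in w_sub.
have [w' w'_sub] := growth.1 (x + (k.+1%:R * s) *: v).
have := IHk w' w'_sub u_sub.
have := linear_growth_step s0 (_ : subgrad phi (_ + s *: v) w) w'_sub.
rewrite -addrA -scalerDl -[X in _ * s + X]mul1r -mulrDl natr1 => /(_ w_sub).
by rewrite -[k.+2]addn1 natrD mulrDl mul1r !dotvBr; lra.
Qed.

End LinearGrowth.

(* Along each of [k] equal steps from [0] to [v] the subgradients increase by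
   [c |v|] in direction [v], so fixed subgradients at [0] and [v] would differ
   by at least [k c |v|] for every [k]. *)
Lemma no_linear_gradient_growth phi (c : R) : (0 < d)%N -> 0 < c ->
  ~ gradient_growth phi (fun r => c * r `^ 1).
Proof.
move=> d0 c0 growth; pose v : 'rV[R]_d := const_mx 1.
have v_gt0 : 0 < norm2 v.
  apply: norm2_gt0; apply/eqP => /rowP/(_ (Ordinal d0)).
  by rewrite !mxE => /eqP; rewrite oner_eq0.
have [u0 u0_sub] := growth.1 0; have [u1 u1_sub] := growth.1 v.
pose k := Num.truncn (dotv v (u1 - u0) / (c * norm2 v)).
have s_gt0 : 0 < k.+1%:R^-1 :> R by rewrite invr_gt0.
have := linear_growth_iter growth (v := v) (k := k) s_gt0 _ u0_sub.
rewrite mulfV // add0r scale1r => /(_ u1 u1_sub).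
have := truncnS_gt (dotv v (u1 - u0) / (c * norm2 v)).
rewrite -/k ltr_pdivrMr ?mulr_gt0 //; lra.
Qed.
End Euclidean.

Lemma m_full_loo (R : realType) (d : nat) (Z : Type) (n : nat) (z : 'I_n -> Z)
    (loss : Z -> 'rV[R]_d -> R) (pen : 'rV[R]_d -> R) (lam : R) (i : 'I_n) b :
  m_full z loss pen lam b = m_loo z loss pen lam i b + n%:R^-1 * loss (z i) b.
Proof. by rewrite /m_full /m_loo (bigD1 i) //= mulrDr -addrA addrC. Qed.

Theorem lemma3 (R : realType) (d : nat) (Z : Type) (n : nat)
  (z : 'I_n -> Z) (loss : Z -> 'rV[R]_d -> R) (pen : 'rV[R]_d -> R)
  (lam : R) (i : 'I_n) (bhat bhat_i : 'rV[R]_d) (c_m q : R) :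
  (0 < d)%N ->
  0 <= lam ->
  is_minimizer (m_full z loss pen lam) bhat ->
  is_minimizer (m_loo z loss pen lam i) bhat_i ->
  (forall b : 'rV[R]_d, differentiable (loss (z i)) b) ->
  0 < c_m -> 0 < q ->
  gradient_growth (m_loo z loss pen lam i) (fun r => c_m * r `^ q) ->
  norm2 (bhat - bhat_i) `^ (q - 1)
    <= n%:R^-1 * c_m^-1 * norm2 (grad (loss (z i)) bhat).
Proof.
move=> d0 _ bhat_min bhat_i_min l_diff c0 _ growth.
have ninv_gt0 : 0 < n%:R^-1 :> R by rewrite invr_gt0 ltr0n (leq_ltn_trans _ (ltn_ord i)).
have q_neq1 : q != 1.
  by apply/eqP => q1; move: growth; rewrite q1; exact: no_linear_gradient_growth.
have bhat_sub : subgrad (m_loo z loss pen lam i) bhat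
    (- (n%:R^-1 *: grad (loss (z i)) bhat)).
  apply: (subgrad_minimizer_addr growth.1 (l_diff bhat) ninv_gt0) => b.
  by rewrite -!m_full_loo; exact: bhat_min.
have gap := gradient_growth_gap growth bhat_sub (subgrad_minimizer bhat_i_min).
rewrite subr0 norm2N norm2Z (gtr0_norm ninv_gt0) in gap.
rewrite (mulrC n%:R^-1) -mulrA; apply: powR_subr1_le c0 q_neq1 (norm2_ge0 _) _ gap.
by rewrite mulr_ge0 ?norm2_ge0 // ltW.
Qed.
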